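(* Let $K$ be a compact set in a metric space, let $\delta>0$ and $C>1$. Then there exists a $(\delta,C)$-discretization of $K$.
   Context: For a compact metric space $K$, $\delta>0$ and $C>1$, a $(\delta,C)$-discretization of $K$ is a finite set of points $\{x_1,\dots,x_n\}\subset K$ such that for all $x,y\in K$, $|\{i: x_i\in B(x,\delta/2)\}|< C\,|\{i: x_i\in B(y,\delta)\}|$, where $B(p,r)$ denotes the open ball of radius $r$ centered at $p$. *)

From HB Require Import structures.
From mathcomp Require Import all_boot all_order all_algebra.
From mathcomp Require Import all_classical all_reals all_analysis.
Set Implicit Arguments. Unset Strict Implicit. Unset Printing Implicit Defensive.
Import Order.TTheory GRing.Theory Num.Theory.
Local Open Scope classical_set_scope.
Local Open Scope ring_scope.

Definition nb_in_ball {R : realType} {M : metricType R} (s : seq M) (x : M) (r : R) : nat :=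
  count (fun p => `[< ball x r p >]) s.

(* (delta, C)-discretization of K: a finite set of (distinct) points of K,
   given as a duplicate-free list, such that for all x, y in K,
   #{i : x_i in B(x, delta/2)} < C * #{i : x_i in B(y, delta)}. *)
Definition discretization {R : realType} {M : metricType R} (K : set M)
    (delta C : R) (s : seq M) : Prop :=
  uniq s /\ (forall p, p \in s -> K p) /\
  (forall x y, K x -> K y ->
     (nb_in_ball s x (delta / 2))%:R < C * (nb_in_ball s y delta)%:R).

From HB Require Import structures.
From mathcomp Require Import all_boot all_order all_algebra.
From mathcomp Require Import all_classical all_reals all_analysis.
Import Order.TTheory GRing.Theory Num.Theory.
Local Open Scope classical_set_scope.
Local Open Scope ring_scope.

(* A maximal delta-separated subset s of K does the job.  Two distinct points
   of s are at distance >= delta, so a ball of radius delta/2 contains at most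
   one of them; by maximality every ball of radius delta centred in K contains
   at least one.  Hence the left count is <= 1 < C <= C * (right count).
   Maximal separated subsets exist because compactness bounds the size of
   separated subsets by the size of a finite delta/2-net. *)

Lemma count_le1_in (T : eqType) (a : pred T) (s : seq T) : uniq s ->
  {in s &, forall p q, a p -> a q -> p = q} -> (count a s <= 1)%N.
Proof.
move=> us a_inj; have [/hasP[p ps ap]|] := boolP (has a s); last first.
  by rewrite has_count lt0n negbK => /eqP->.
rewrite (@eq_in_count _ _ (pred1 p)) ?count_uniq_mem ?leq_b1 // => q qs /=.
by apply/idP/eqP => [aq|->//]; exact: a_inj.
Qed.

Section Separated.
Context {R : realType} {M : metricType R}.

Lemma compact_ball_cover (K : set M) (r : R) : compact K -> 0 < r ->
  exists S : seq M, forall x, K x -> exists2 c, c \in S & ball c r x.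
Proof.
move=> /compact_near_coveringP cK r0.
(* Each x is covered as soon as the list contains x; compactness makes one
   finite list work for all of K at once. *)
pose F := filter_from [set: seq M] (fun T => [set S : seq M | {subset T <= S}]).
have FF : Filter F.
  apply: filter_from_filter; first by exists [::].
  move=> T1 T2 _ _; exists (T1 ++ T2) => // S sub.
  by split=> p pT; apply: sub; rewrite mem_cat pT ?orbT.
have [|T _ /(_ T (fun _ => id))] :=
  cK _ F (fun S x => exists2 c, c \in S & ball c r x) FF; last by exists T.
move=> x Kx; near=> y S => /=; exists x.
  by near: S; exists [:: x] => // S /(_ x); apply; rewrite mem_head.
by near: y; exact: nbhsx_ballx.
Unshelve. all: by end_near. Qed.

Definition separated (d : R) (s : seq M) :=
  uniq s /\ {in s &, forall p q, p != q -> ~ ball p d q}.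

Lemma separated_cons (d : R) (y : M) (s : seq M) : 0 < d -> separated d s ->
  (forall p, p \in s -> ~ ball p d y) -> separated d (y :: s).
Proof.
move=> d0 [us sep] ny; split.
  by rewrite /= us andbT; apply/negP => ys; exact: ny ys (ballxx y d0).
move=> p q; rewrite !in_cons => /predU1P[->|ps] /predU1P[->|qs].
- by rewrite eqxx.
- by move=> _ /ball_sym; exact: ny.
- by move=> _; exact: ny.
- exact: sep.
Qed.

Lemma separated_count_ball_le1 (d : R) (s : seq M) (x : M) :
  separated d s -> (nb_in_ball s x (d / 2) <= 1)%N.
Proof.
move=> [us sep]; apply: count_le1_in => // p q ps qs /asboolP bp /asboolP bq.
by apply: contrapT => /eqP pq; exact: sep p q ps qs pq (ball_splitr bp bq).
Qed.

Lemma separated_size_le_cover (d : R) (s S : seq M) : separated d s ->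
  (forall p, p \in s -> exists2 c, c \in S & ball c (d / 2) p) ->
  (size s <= size S)%N.
Proof.
move=> [us sep] cover.
have /choice[f fP] : forall p, exists c, p \in s -> c \in S /\ ball c (d / 2) p.
  move=> p; have [/cover[c cS bcp]|_] := boolP (p \in s).
    by exists c.
  by exists p.
have f_inj : {in s &, injective f}.
  move=> p q ps qs fpq; apply: contrapT => /eqP pq.
  have [_ bp] := fP p ps; have [_ bq] := fP q qs; rewrite fpq in bp.
  exact: sep p q ps qs pq (ball_splitr bp bq).
rewrite -(size_map f); apply: uniq_leq_size; first by rewrite map_inj_in_uniq.
by move=> _ /mapP[p ps ->]; have [] := fP p ps.
Qed.

Lemma maximal_separated_exists (K : set M) (d : R) (N : nat) : 0 < d ->
  (forall s, separated d s -> {in s, forall p, K p} -> (size s <= N)%N) ->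
  exists s, [/\ separated d s, {in s, forall p, K p} &
                forall y, K y -> exists2 p, p \in s & ball p d y].
Proof.
move=> d0 bound.
pose P n := `[< exists s, [/\ separated d s, {in s, forall p, K p} & size s = n] >].
have P0 : exists n, P n by exists 0%N; apply/asboolP; exists [::].
have P_le n : P n -> (n <= N)%N by move=> /asboolP[s [ss sK <-]]; exact: bound.
case: (ex_maxnP P0 P_le) => n /asboolP[s [ss sK <-]] s_max.
exists s; split=> // y Ky; apply: contrapT => ny.
suff /s_max : P (size (y :: s)) by rewrite ltnn.
apply/asboolP; exists (y :: s); split=> //.
  by apply: separated_cons => // p ps bpy; apply: ny; exists p.
by move=> p /predU1P[->|/sK].
Qed.

Lemma maximal_separated_discretization (K : set M) (d C : R) (s : seq M) :
  1 < C -> separated d s -> {in s, forall p, K p} ->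
  (forall y, K y -> exists2 p, p \in s & ball p d y) ->
  discretization K d C s.
Proof.
move=> C1 ss sK net; split; first by case: ss.
split=> // x y _ /net[p ps bpy].
have y_pos : (0 < nb_in_ball s y d)%N.
  by rewrite -has_count; apply/hasP; exists p => //; apply/asboolP/ball_sym.
apply: (@le_lt_trans _ _ 1); first by rewrite lern1 separated_count_ball_le1.
apply: (lt_le_trans C1); rewrite ler_peMr ?ler1n //.
exact: le_trans ler01 (ltW C1).
Qed.

End Separated.

Theorem lemma1 (R : realType) (M : metricType R) (K : set M) (delta C : R) :
  compact K -> 0 < delta -> 1 < C ->
  exists s : seq M, discretization K delta C s.
Proof.
move=> cK d0 C1.
have d2 : 0 < delta / 2 by rewrite divr_gt0.
have [S cover] := compact_ball_cover K (delta / 2) cK d2.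
have size_le s : separated delta s -> {in s, forall p, K p} -> (size s <= size S)%N.
  by move=> ss sK; apply: separated_size_le_cover ss _ => p /sK /cover.
have [s [ss sK net]] := maximal_separated_exists K delta (size S) d0 size_le.
by exists s; exact: (maximal_separated_discretization K delta C s C1 ss sK net).
Qed.
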